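(* Let $j\in\mathcal J$ and let $\mathcal S_j=\mathcal Q(\mathcal F_j)$. Then $\{(\hat f_j,\hat h_j):\exists\,\hat z_j\text{ with }((\hat f_j,\hat h_j),\hat z_j)\in\mathcal S_j\}=\mathcal K(\mathcal C^{(\chi)}_j)$, the convex hull of $\{\Xi_j(\tilde b):\tilde b\in\mathcal C^{(\chi)}_j\}$.
   Context: Let $R$ be a finite ring with $q$ elements, $R^-=R\setminus\{0\}$, $\mathcal H$ an $m\times n$ matrix over $R$, $\mathcal J=\{1,\dots,m\}$. Fix $j\in\mathcal J$, let $\mathcal I_j=\{i:\mathcal H_{j,i}\ne0\}=\{i_1,\dots,i_{d_j}\}$ in a fixed order, with $d_j\ge4$. Let $\mathcal F_j$ be the $(d_j-2)\times(2d_j-3)$ matrix over $R$, acting on vectors $(b\mid\chi^j)$ with $b=(b_{i_1},\dots,b_{i_{d_j}})$ and $\chi^j=(\chi^j_1,\dots,\chi^j_{d_j-3})$, whose rows express the equations $b_{i_1}\mathcal H_{j,i_1}+b_{i_2}\mathcal H_{j,i_2}+\chi^j_1=0$; $-\chi^j_\ell+b_{i_{\ell+2}}\mathcal H_{j,i_{\ell+2}}+\chi^j_{\ell+1}=0$ for $\ell=1,\dots,d_j-4$; $-\chi^j_{d_j-3}+b_{i_{d_j-1}}\mathcal H_{j,i_{d_j-1}}+b_{i_{d_j}}\mathcal H_{j,i_{d_j}}=0$; and $\mathcal C^{(\chi)}_j$ is the code of length $2d_j-3$ consisting of all solutions. For any $r\times N$ matrix $\mathcal A$ over $R$ with rows indexed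 by $\rho$, let $\mathcal A$'s local codes be $\mathcal C_\rho=\{g\in R^{\mathrm{supp}(\mathcal A_\rho)}:\sum_{i}g_i\mathcal A_{\rho,i}=0\}$, and let $\mathcal Q(\mathcal A)$ be the set of $(F,W)$, $F=(F_i^{(\alpha)})_{i\le N,\alpha\in R^-}$ real, $W=(W_{\rho,g})_{\rho,g\in\mathcal C_\rho}$ real, with $W_{\rho,g}\ge0$, $\sum_{g\in\mathcal C_\rho}W_{\rho,g}=1$ for each $\rho$, and $F_i^{(\alpha)}=\sum_{g\in\mathcal C_\rho,g_i=\alpha}W_{\rho,g}$ for all $\rho$, $i\in\mathrm{supp}(\mathcal A_\rho)$, $\alpha\in R^-$. For $\mathcal A=\mathcal F_j$, write points of $\mathcal Q(\mathcal F_j)$ as $((\hat f_j,\hat h_j),\hat z_j)$ where $\hat f_j$ collects the $F$-coordinates for the $b$-positions and $\hat h_j$ those for the $\chi^j$-positions. Let $\xi:R\to\{0,1\}^{q-1}$ (coordinates indexed by $R^-$), $\xi(a)^{(\gamma)}=1$ iff $\gamma=a$, and $\Xi_j(b\mid\chi^j)=(\xi(b_{i_1})\mid\cdots\mid\xi(b_{i_{d_j}})\mid\xi(\chi^j_1)\mid\cdots\mid\xi(\chi^j_{d_j-3}))$. *)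

From HB Require Import structures.
From mathcomp Require Import all_boot all_order all_algebra.
From mathcomp Require Import reals.
Set Implicit Arguments. Unset Strict Implicit. Unset Printing Implicit Defensive.
Import Order.TTheory GRing.Theory Num.Theory.
Local Open Scope ring_scope.

Definition nzelt (Rg : finNzRingType) := {x : Rg | x != 0}.

Definition suppT (Rg : finNzRingType) r N (A : 'M[Rg]_(r, N)) (rho : 'I_r) :=
  {i : 'I_N | A rho i != 0}.

Definition in_local_code (Rg : finNzRingType) r N (A : 'M[Rg]_(r, N)) (rho : 'I_r)
  (g : {ffun suppT A rho -> Rg}) : bool :=
  \sum_(i : suppT A rho) g i * A rho (val i) == 0.

(* (F, W) in Q(A).  W is given on all of R^{supp(A_rho)}; only its values on
   the local code C_rho are constrained/used. *)
Definition inQ (K : realType) (Rg : finNzRingType) r N (A : 'M[Rg]_(r, N))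
  (F : 'I_N -> nzelt Rg -> K)
  (W : forall rho : 'I_r, {ffun suppT A rho -> Rg} -> K) : Prop :=
  [/\ (forall rho g, in_local_code g -> 0 <= W rho g),
      (forall rho, \sum_(g | in_local_code g) W rho g = 1) &
      (forall rho (i : suppT A rho) (alpha : nzelt Rg),
          F (val i) alpha =
          \sum_(g | in_local_code g && (g i == val alpha)) W rho g)].

Definition in_code (Rg : finNzRingType) r N (A : 'M[Rg]_(r, N))
  (x : {ffun 'I_N -> Rg}) : bool :=
  [forall rho, \sum_(i < N) x i * A rho i == 0].

Definition Xi (K : realType) (Rg : finNzRingType) N (x : {ffun 'I_N -> Rg})
  (i : 'I_N) (alpha : nzelt Rg) : K :=
  if x i == val alpha then 1 else 0.

Definition in_conv_hull (K : realType) (Rg : finNzRingType) N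
  (C : pred {ffun 'I_N -> Rg}) (F : 'I_N -> nzelt Rg -> K) : Prop :=
  exists lam : {ffun 'I_N -> Rg} -> K,
    [/\ (forall c, C c -> 0 <= lam c),
        \sum_(c | C c) lam c = 1 &
        (forall i alpha, F i alpha = \sum_(c | C c) lam c * Xi K c i alpha)].

(* h : 'I_d -> Rg are the nonzero entries H_{j,i_1},...,H_{j,i_d} (0-based).
   Columns 0..d-1 are b_{i_1..i_d}; column d+k is chi_{k+1} (k = 0..d-4).
   Rows (0-based) rho = 0 .. d-3 are the d-2 equations of the context. *)
Definition Fmat (Rg : finNzRingType) (d : nat) (h : 'I_d -> Rg)
  : 'M[Rg]_(d - 2, d + (d - 3)) :=
  \matrix_(rho < d - 2, c < d + (d - 3))
    let r := val rho in let c := val c in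
    let hc := if @insub nat (fun k => (k < d)%N) 'I_d c is Some k then h k else 0 in
    if r == 0%N then
      (if (c == 0%N) || (c == 1%N) then hc
       else if c == d then 1 else 0)
    else if r == (d - 3)%N then
      (if c == (d + (d - 4))%N then -1
       else if (c == (d - 2)%N) || (c == (d - 1)%N) then hc else 0)
    else
      (if c == (d + r - 1)%N then -1
       else if c == r.+1 then hc
       else if c == (d + r)%N then 1 else 0).

Definition Fj (Rg : finNzRingType) m n (H : 'M[Rg]_(m, n)) (j : 'I_m) d
  (idx : 'I_d -> 'I_n) := Fmat (fun k => H j (idx k)).

From HB Require Import structures.
From mathcomp Require Import all_boot all_order all_algebra.
From mathcomp Require Import reals zify.
Import Order.TTheory GRing.Theory Num.Theory.
Local Open Scope ring_scope.
Set Implicit Arguments. Unset Strict Implicit. Unset Printing Implicit Defensive.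

(* The rows of F_j form a chain: row rho+1 meets the earlier rows in a single
   column (the variable chi_rho), which also lies in row rho.  For (F, W) in
   Q(F_j) the local distributions W_rho all have the same marginal on a shared
   column, so they can be glued row by row, coupling each new row with the
   current joint distribution through the shared symbol.  The result is a
   probability on codewords whose average of one-hot images is F.  Conversely,
   restricting a convex combination of codewords to the rows gives W. *)

Lemma sum_supported (V : nmodType) (T : finType) (Q b : pred T) (G : T -> V) :
  (forall x, G x != 0 -> Q x) -> \sum_(x | Q x && b x) G x = \sum_(x | b x) G x.
Proof.
move=> supp; rewrite [RHS](bigID Q) /= [X in _ + X]big1 ?addr0.
  by apply: eq_bigl => x; rewrite andbC.
by move=> x /andP[_ nQx]; apply: contraNeq nQx; exact: supp.
Qed.

Lemma sum_pushforward (V : nmodType) (X Y Z : finType) (m : X -> Y -> Z)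
    (R : X -> Y -> V) (c : pred Z) :
  \sum_(z | c z) \sum_(p : X * Y | m p.1 p.2 == z) R p.1 p.2 =
  \sum_x \sum_(y | c (m x y)) R x y.
Proof.
rewrite [RHS]pair_big_dep [RHS](partition_big (fun p => m p.1 p.2) c) //=.
apply: eq_bigr => z cz; apply: eq_bigl => p.
by case: eqP => [->|]; rewrite ?cz ?andbF.
Qed.

Lemma pushforward_neq0 (V : numDomainType) (X Y Z : finType) (m : X -> Y -> Z)
    (R : X -> Y -> V) (z : Z) :
  (forall x y, 0 <= R x y) -> \sum_(p : X * Y | m p.1 p.2 == z) R p.1 p.2 != 0 ->
  exists x y, m x y = z /\ R x y != 0.
Proof.
move=> R0 /eqP/(psumr_neq0P (fun p _ => R0 p.1 p.2))[[x y] /andP[/eqP mz]].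
by rewrite lt0r => /andP[Rxy _]; exists x, y.
Qed.

Section Coupling.
Variable K : realType.

Lemma coupling_on_fibres (X Y : finType) (S : eqType) (f : X -> S) (g : Y -> S)
    (P : X -> K) (Q : Y -> K) :
  (forall x, 0 <= P x) -> (forall y, 0 <= Q y) ->
  (forall s, \sum_(x | f x == s) P x = \sum_(y | g y == s) Q y) ->
  exists R : X -> Y -> K,
  [/\ (forall x, \sum_y R x y = P x), (forall y, \sum_x R x y = Q y),
      (forall x y, 0 <= R x y) &
      (forall x y, R x y != 0 -> [/\ f x = g y, P x != 0 & Q y != 0])].
Proof.
move=> P0 Q0 same_push.
pose mu s := \sum_(x | f x == s) P x.
have mu_eq0P s : mu s = 0 -> forall x, f x = s -> P x = 0.
  by move=> mu0 x fx; apply: (psumr_eq0P (fun x _ => P0 x) mu0); rewrite fx.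
exists (fun x y => if f x == g y then P x * Q y / mu (f x) else 0); split.
- move=> x; rewrite -big_mkcond /=.
  under eq_bigl do rewrite eq_sym.
  under eq_bigr do rewrite mulrAC.
  rewrite -big_distrr /= -same_push.
  have [mu0|mu_neq0] := eqVneq (mu (f x)) 0; last by rewrite divfK.
  by rewrite (mu_eq0P _ mu0 x) ?mul0r.
- move=> y; rewrite -big_mkcond /=.
  under eq_bigr => x /eqP-> do rewrite -mulrA.
  rewrite -big_distrl /=.
  have [mu0|mu_neq0] := eqVneq (mu (g y)) 0.
    have Qy0 : \sum_(y' | g y' == g y) Q y' = 0 by rewrite -same_push.
    by rewrite (psumr_eq0P (fun y _ => Q0 y) Qy0) ?mul0r ?mulr0.
  by rewrite mulrCA divff ?mulr1.
- move=> x y; case: ifP => // _.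
  by rewrite mulr_ge0 ?mulr_ge0 ?invr_ge0 ?sumr_ge0.
- move=> x y; case: (f x =P g y) => [fg|_]; last by rewrite eqxx.
  by rewrite !mulf_eq0 !negb_or => /andP[/andP[]]; split.
Qed.

End Coupling.

Section LocalCodes.
Variables (K : realType) (Rg : finNzRingType) (r N : nat) (A : 'M[Rg]_(r, N)).
Local Notation word := {ffun 'I_N -> Rg}.
Local Notation local_word rho := {ffun suppT A rho -> Rg}.

Definition restrict (x : word) (rho : 'I_r) : local_word rho := [ffun i => x (val i)].

Definition overwrite rho (x : word) (y : local_word rho) : word :=
  [ffun c => if insub c is Some i then y i else x c].

Lemma restrict_overwrite rho x (y : local_word rho) : restrict (overwrite x y) rho = y.
Proof. by apply/ffunP => i; rewrite !ffunE valK. Qed.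

Lemma in_codeE x : in_code A x = [forall rho, in_local_code (restrict x rho)].
Proof.
apply: eq_forallb => rho; rewrite /in_local_code; congr (_ == 0).
rewrite (bigID (fun i => A rho i != 0)) /= [X in _ + X]big1 ?addr0; last first.
  by move=> i /negbNE/eqP ->; rewrite mulr0.
rewrite (reindex_omap (val : suppT A rho -> 'I_N) insub) => [|i Ai]; last by rewrite insubT.
by apply: eq_big => [i|i _]; rewrite ?(valP i) ?valK ?eqxx ?ffunE.
Qed.

Definition glued_upto (W : forall rho, local_word rho -> K) (t : nat) (P : word -> K) :=
 [/\ forall x, 0 <= P x, \sum_x P x = 1,
     forall x, P x != 0 -> forall rho : 'I_r, (rho < t)%N -> in_local_code (restrict x rho)
   & forall rho : 'I_r, (rho < t)%N -> forall w, in_local_code w ->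
       \sum_(x | restrict x rho == w) P x = W rho w].

Lemma glued_upto_step W t P (rho : 'I_r) (S : eqType) (f : word -> S) (g : local_word rho -> S) :
  val rho = t -> (forall w, in_local_code w -> 0 <= W rho w) -> glued_upto W t P ->
  (forall s, \sum_(x | f x == s) P x = \sum_(w | in_local_code w && (g w == s)) W rho w) ->
  (forall x y, f x = g y -> forall rho' : 'I_r, (rho' < t)%N ->
     restrict (overwrite x y) rho' = restrict x rho') ->
  exists P', glued_upto W t.+1 P'.
Proof.
move=> rho_t W0 [P0 P1 P_code P_marg] same_push overwrite_old.
pose Q (w : local_word rho) := if in_local_code w then W rho w else 0.
have Q0 w : 0 <= Q w by rewrite /Q; case: ifP => // /W0.
have [R [RP RQ R0 R_supp]] : exists R : word -> local_word rho -> K,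
  [/\ (forall x, \sum_y R x y = P x), (forall y, \sum_x R x y = Q y),
      (forall x y, 0 <= R x y) &
      (forall x y, R x y != 0 -> [/\ f x = g y, P x != 0 & Q y != 0])].
  apply: coupling_on_fibres => // s; rewrite same_push big_mkcond [RHS]big_mkcond.
  by apply: eq_bigr => w _; rewrite /Q; case: in_local_code; case: (g w == s).
pose P' z := \sum_(p | overwrite p.1 p.2 == z) R p.1 p.2.
have sum_P' (c : pred word) :
    \sum_(z | c z) P' z = \sum_x \sum_(y | c (overwrite x y)) R x y.
  exact: (sum_pushforward (@overwrite rho)).
have rho_new (rho' : 'I_r) : (rho' < t.+1)%N -> ~~ (rho' < t)%N -> rho' = rho.
  by move=> lt ge; apply: val_inj; rewrite rho_t; apply/eqP; rewrite eqn_leq -ltnS lt leqNgt ge.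
exists P'; split.
- by move=> z; apply: sumr_ge0 => p _; exact: R0.
- by rewrite -P1 (sum_P' xpredT); apply: eq_bigr => x _; rewrite RP.
- move=> z P'z rho' lt.
  have [x [y [<- Rxy]]] := pushforward_neq0 R0 P'z.
  have [fg Px Qy] := R_supp x y Rxy.
  have [old|new] := boolP (rho' < t)%N; first by rewrite overwrite_old // P_code.
  rewrite (rho_new _ lt new) restrict_overwrite.
  by move: Qy; rewrite /Q; case: ifP; rewrite ?eqxx.
- move=> rho' lt w lw; rewrite sum_P'.
  have [old|new] := boolP (rho' < t)%N.
    rewrite -(P_marg rho' old w lw) [RHS]big_mkcond; apply: eq_bigr => x _.
    rewrite -RP big_mkcond /=.
    transitivity (\sum_y if restrict x rho' == w then R x y else 0).
      apply: eq_bigr => y _; have [->|Rxy] := eqVneq (R x y) 0; first by rewrite !if_same.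
      by have [fg _ _] := R_supp x y Rxy; rewrite overwrite_old.
    by case: ifP => // _; rewrite big1.
  have erho := rho_new _ lt new; subst rho'.
  under eq_bigr do under eq_bigl do rewrite restrict_overwrite.
  by rewrite exchange_big big_pred1_eq RQ /Q lw.
Qed.

Definition running_intersection :=
  forall rho1 rho2 : 'I_r, val rho2 = (val rho1).+1 ->
  exists s, [/\ A rho1 s != 0, A rho2 s != 0 &
    forall rho' : 'I_r, (rho' <= rho1)%N -> forall c, A rho' c != 0 -> A rho2 c != 0 -> c = s].

Section Marginals.
Variables (F : 'I_N -> nzelt Rg -> K) (W : forall rho, local_word rho -> K).
Arguments W : clear implicits.
Hypothesis WinQ : inQ F W.

Definition local_marginal rho (s : 'I_N) (h : A rho s != 0) (v : Rg) : K :=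
  \sum_(w | in_local_code w && (w (Sub s h) == v)) W rho w.

Lemma local_marginal_neq0 rho s (h : A rho s != 0) (alpha : nzelt Rg) :
  local_marginal h (val alpha) = F s alpha.
Proof. by have [_ _ WF] := WinQ; rewrite (WF rho (Sub s h)). Qed.

Lemma sum_local_marginal rho s (h : A rho s != 0) : \sum_v local_marginal h v = 1.
Proof.
have [_ W1 _] := WinQ; rewrite -(W1 rho).
by rewrite [RHS](partition_big (fun w : local_word rho => w (Sub s h)) xpredT).
Qed.

(* Both marginals are pinned by F off 0, and at 0 by total mass 1. *)
Lemma local_marginal_eq rho1 rho2 s (h1 : A rho1 s != 0) (h2 : A rho2 s != 0) v :
  local_marginal h1 v = local_marginal h2 v.
Proof.
have eq_neq0 v' : v' != 0 -> local_marginal h1 v' = local_marginal h2 v'.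
  by move=> v'0; rewrite -[v']/(val (exist _ v' v'0 : nzelt Rg)) !local_marginal_neq0.
have [->|] := eqVneq v 0; last exact: eq_neq0.
have := sum_local_marginal h1; rewrite -(sum_local_marginal h2).
rewrite (bigD1 0) // [in RHS](bigD1 0) //=.
under eq_bigr => v' v'0 do rewrite eq_neq0 //.
exact: addIr.
Qed.

Lemma glued_column_marginal t P rho s (h : A rho s != 0) v :
  glued_upto W t P -> (rho < t)%N -> \sum_(x : word | x s == v) P x = local_marginal h v.
Proof.
move=> [_ _ P_code P_marg] lt.
rewrite -(sum_supported _ (fun x Px => P_code x Px rho lt)).
rewrite (partition_big (restrict^~ rho)
           (fun w => in_local_code w && (w (Sub s h) == v))) => [|x]; last by rewrite ffunE.
apply: eq_bigr => w /andP[lw /eqP wv]; rewrite -(P_marg rho lt w lw).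
apply: eq_bigl => x; case: (restrict x rho =P w) => [xw|_]; rewrite ?andbF //.
by rewrite xw lw -wv -xw ffunE SubK eqxx.
Qed.

Lemma glued_upto_succ t P : running_intersection -> (t < r)%N ->
  glued_upto W t P -> exists P', glued_upto W t.+1 P'.
Proof.
move=> chain ltr glued; have [W0 W1 _] := WinQ.
pose rho := Ordinal ltr.
case: t => [|t] in ltr glued rho *.
  apply: (@glued_upto_step W 0 P rho unit (fun _ => tt) (fun _ => tt)) => //.
  - exact: W0.
  - move=> -[]; have [_ P1 _ _] := glued; rewrite (eq_bigl xpredT) // P1 -(W1 rho).
    by apply: eq_bigl => w; rewrite andbT.
pose rho1 := Ordinal (ltnW ltr).
have [s [h1 h2 only_s]] := chain rho1 rho erefl.
apply: (glued_upto_step (P := P) (rho := rho) (f := fun x => x s) (g := fun y => y (Sub s h2))) => //.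
- exact: W0.
- by move=> v; rewrite (glued_column_marginal h1 v glued (ltnSn t)) (local_marginal_eq h1 h2).
- move=> x y fg rho' lt; apply/ffunP => i; rewrite !ffunE.
  case: insubP => [k k_supp val_k|_] //.
  have i_s : val i = s := only_s rho' lt (val i) (valP i) k_supp.
  by rewrite i_s fg; congr (y _); apply: val_inj; rewrite val_k.
Qed.

Lemma glued_upto_exists t : running_intersection -> (t <= r)%N ->
  exists P, glued_upto W t P.
Proof.
move=> chain; elim: t => [_|t IH ltr].
  exists (fun x => if x == [ffun=> 0] then 1 else 0); split => //.
  - by move=> x; case: ifP.
  - by rewrite -big_mkcond big_pred1_eq.
have [P glued] := IH (ltnW ltr); exact: glued_upto_succ chain ltr glued.
Qed.

Lemma glued_conv_hull P : (forall i, exists rho, A rho i != 0) ->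
  glued_upto W r P -> in_conv_hull (in_code A) F.
Proof.
move=> cover glued; have [P0 P1 P_code _] := glued.
have P_in_code x : P x != 0 -> in_code A x.
  by move=> Px; rewrite in_codeE; apply/forallP => rho; exact: P_code.
exists P; split => //.
  by rewrite -P1 -(sum_supported xpredT P_in_code); apply: eq_bigl => x; rewrite andbT.
move=> i alpha; have [rho h] := cover i.
rewrite -(local_marginal_neq0 h alpha) -(glued_column_marginal h _ glued (ltn_ord rho)).
rewrite -(sum_supported _ P_in_code) big_mkcondr; apply: eq_bigr => c _.
by rewrite /Xi; case: ifP; rewrite ?mulr1 ?mulr0.
Qed.

End Marginals.

Lemma conv_hull_inQ (F : 'I_N -> nzelt Rg -> K) :
  in_conv_hull (in_code A) F -> exists W, inQ F (A := A) W.
Proof.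
move=> [lam [lam0 lam1 lamF]].
have code_local c rho : in_code A c -> in_local_code (restrict c rho).
  by rewrite in_codeE => /forallP.
exists (fun rho (w : local_word rho) => \sum_(c | in_code A c && (restrict c rho == w)) lam c).
split.
- by move=> rho w _; apply: sumr_ge0 => c /andP[/lam0].
- move=> rho; rewrite -lam1 [RHS](partition_big (restrict^~ rho) (@in_local_code _ _ _ A rho)) => [//|c].
  exact: code_local.
- move=> rho i alpha; rewrite lamF.
  transitivity (\sum_(c | in_code A c && (c (val i) == val alpha)) lam c).
    rewrite [RHS]big_mkcondr; apply: eq_bigr => c _.
    by rewrite /Xi; case: ifP; rewrite ?mulr1 ?mulr0.
  rewrite (partition_big (restrict^~ rho)
             (fun w => in_local_code w && (w i == val alpha))) => [|c /andP[cc ci]]; last first.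
    by rewrite ffunE ci code_local.
  apply: eq_bigr => w /andP[_ /eqP wi]; apply: eq_bigl => c.
  case: (restrict c rho =P w) => [cw|_]; rewrite ?andbF ?andbT //.
  by rewrite -wi -cw ffunE eqxx andbT.
Qed.

Theorem inQ_conv_hullP (F : 'I_N -> nzelt Rg -> K) :
  (forall i, exists rho, A rho i != 0) -> running_intersection ->
  (exists W, inQ F (A := A) W) <-> in_conv_hull (in_code A) F.
Proof.
move=> cover chain; split=> [[W WinQ]|]; last exact: conv_hull_inQ.
have [P glued] := glued_upto_exists WinQ chain (leqnn r).
exact: glued_conv_hull glued.
Qed.

End LocalCodes.

Section Fmat.
Variables (Rg : finNzRingType) (d : nat) (h : 'I_d -> Rg).
Hypotheses (h_neq0 : forall k, h k != 0) (d_ge4 : (4 <= d)%N).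

Definition Fmat_support (rho c : nat) : Prop :=
  (rho = 0 /\ (c = 0 \/ c = 1 \/ c = d))%N \/
  (rho <> 0 /\ rho = d - 3 /\ (c = d + (d - 4) \/ c = d - 2 \/ c = d - 1))%N \/
  (rho <> 0 /\ rho <> d - 3 /\ (c = d + rho - 1 \/ c = rho.+1 \/ c = d + rho))%N.

Ltac case_Fmat_entry := first
  [ case: ifP => [ /orP[/eqP ?|/eqP ?] | /norP[/eqP ? /eqP ?] ]
  | case: ifP => [/eqP ? | /eqP ?] ].

Lemma Fmat_supportP (rho : 'I_(d - 2)) (c : 'I_(d + (d - 3))) :
  Fmat h rho c != 0 <-> Fmat_support rho c.
Proof.
have := ltn_ord rho; have := ltn_ord c.
rewrite mxE /Fmat_support /=; split.
  by repeat case_Fmat_entry; rewrite ?eqxx //; lia.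
by repeat case_Fmat_entry; rewrite ?insubT ?oppr_eq0 ?oner_eq0 //; lia.
Qed.

Lemma Fmat_cover (c : 'I_(d + (d - 3))) : exists rho : 'I_(d - 2), Fmat h rho c != 0.
Proof.
have ltc := ltn_ord c.
have [rho [lt_rho supp]] : exists rho, (rho < d - 2)%N /\ Fmat_support rho c.
  rewrite /Fmat_support.
  have [c_lt2|c_ge2] := ltnP c 2; first by exists 0%N; lia.
  have [c_lt|c_ge] := ltnP c (d - 2); first by exists (c - 1)%N; lia.
  have [c_ltd|c_ged] := ltnP c d; first by exists (d - 3)%N; lia.
  by exists (c - d)%N; lia.
by exists (Ordinal lt_rho); apply/Fmat_supportP.
Qed.

(* Row rho+1 meets the earlier rows only in the chi-column d + rho. *)
Lemma Fmat_running_intersection : running_intersection (Fmat h).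
Proof.
move=> rho1 rho2 /= rho2E; have lt1 := ltn_ord rho1; have lt2 := ltn_ord rho2.
have lt_s : (d + rho1 < d + (d - 3))%N by lia.
exists (Ordinal lt_s); split; rewrite ?Fmat_supportP /Fmat_support /=; try lia.
move=> rho' le c /Fmat_supportP + /Fmat_supportP; rewrite /Fmat_support => s1 s2.
by apply: val_inj => /=; have := ltn_ord rho'; lia.
Qed.

End Fmat.

Theorem corollary2 (K : realType) (Rg : finNzRingType) (m n : nat)
  (H : 'M[Rg]_(m, n)) (j : 'I_m) (d : nat) (idx : 'I_d -> 'I_n)
  (idx_inj : injective idx)
  (idx_supp : forall i : 'I_n, H j i != 0 <-> exists k, idx k = i)
  (hd : (4 <= d)%N)
  (F : 'I_(d + (d - 3)) -> nzelt Rg -> K) :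
  (exists W, inQ F (A := Fj H j idx) W) <->
  in_conv_hull (in_code (Fj H j idx)) F.
Proof.
have h_neq0 k : H j (idx k) != 0 by apply/idx_supp; exists k.
apply: inQ_conv_hullP.
- exact: Fmat_cover.
- exact: Fmat_running_intersection.
Qed.
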